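(* In every $\mathcal L$-model: (1) for every program $A\in\mathcal L_a$, $\to_A=\bigcup_{B\in\mathcal L(A)}\to_B$; (2) for any two interchangeable words $A,B\in(\mathrm{AtP}_\Omega\cup\mathcal L_s)^*$, $\to_A=\to_B$.
   Context: $\tau$PDL syntax: formulas $\mathcal L_s$: $\varphi::=p\mid\neg\varphi\mid\forall A.\varphi\mid\mathsf C_\imath A$; programs $\mathcal L_a$: $A::=a\mid\varphi\mid\varphi\Rightarrow\varphi\mid AA\mid A+A\mid A^*$ ($a\in\mathrm{AtP}$, atomic programs), interpreted in $\mathcal L$-models by the standard relational semantics of $\tau$PDL: $\to_\varphi=\{(w,w):w\models\varphi\}$, $\to_{AB}=\to_A\circ\to_B$, $\to_{A+B}=\to_A\cup\to_B$, $\to_{A^*}=\bigcup_{n\ge0}(\to_A)^n$, $\to_{\varphi\Rightarrow\psi}=\bigcup\{\to_C: C\in\Sigma^+,\ \forall w\models\varphi\,\forall w'(w\to_Cw'\Rightarrow w'\models\psi)\}$ with $\Sigma^+$ the finite nonempty compositions of atomic programs, tests and $\Rightarrow$-terms. $\Omega:=\mathsf{tt}\Rightarrow\mathsf{tt}$ ($\mathsf{tt}$ a tautology), $\mathrm{AtP}_\Omega=\mathrm{AtP}\cup\{\Omega\}$. The language $\mathcal L(A)$ of a program (a set of words over the alphabet $\mathrm{AtP}_\Omega\cup\mathcal L_s$) is defined by $\mathcal L(a)=\{a\}$, $\mathcal L(\varphi)=\{\varphi\}$, $\mathcal L(\Omega)=\{\Omega\}$, $\mathcal L(\varphi\Rightarrow\psi)=\mathcal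 L((\neg\varphi)\Omega+\Omega\psi)$, $\mathcal L(A+B)=\mathcal L(A)\cup\mathcal L(B)$, $\mathcal L(AB)=\mathcal L(A)\mathcal L(B)$, $\mathcal L(A^* )=\mathcal L(A)^*$ (usual concatenation and Kleene star, $\varepsilon$ the empty word). A word $A_1\cdots A_n$ denotes the composed relation $\to_{A_1}\circ\cdots\circ\to_{A_n}$, the empty word denoting the identity. Two nonempty words $A=A_1\cdots A_k$ and $B=B_1\cdots B_n$, each written as blocks that are either single letters of $\mathrm{AtP}_\Omega$ or maximal consecutive runs of formulas, are interchangeable iff $A=B$, or $k=n$ and for each $i$: if $A_i\in\mathrm{AtP}_\Omega$ then $B_i=A_i$, and if $A_i=\varphi_1\cdots\varphi_r$ is a run of formulas then $B_i=\psi_1\cdots\psi_l$ is a run of formulas with $\bigwedge_j\psi_j$ semantically equivalent to $\bigwedge_j\varphi_j$. *)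

From Stdlib Require Import List.
Import ListNotations.
Set Implicit Arguments.

Section TauPDL.
Variables (PV Idx AtP : Type).

Inductive form : Type :=
  | Var : PV -> form
  | Not : form -> form
  | Box : prog -> form -> form
  | Cst : Idx -> prog -> form
with prog : Type :=
  | Atom : AtP -> prog
  | Test : form -> prog
  | Imp : form -> form -> prog
  | Seq : prog -> prog -> prog
  | Cho : prog -> prog -> prog
  | Star : prog -> prog.

Inductive sigmaP : prog -> Prop :=
  | sigma_atom a : sigmaP (Atom a)
  | sigma_test f : sigmaP (Test f)
  | sigma_imp f g : sigmaP (Imp f g)
  | sigma_seq C D : sigmaP C -> sigmaP D -> sigmaP (Seq C D).

Fixpoint relpow {W : Type} (r : W -> W -> Prop) (n : nat) : W -> W -> Prop :=
  match n with
  | O => fun w w' => w = w'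
  | S k => fun w w' => exists v, r w v /\ relpow r k v w'
  end.

(* Atomic programs are arbitrary;
   the clause for C_i A is left unconstrained (it plays no role here). *)
Record model : Type := Model {
  W : Type;
  val : PV -> W -> Prop;
  rel : prog -> W -> W -> Prop;
  sat : form -> W -> Prop;
  sat_var : forall p w, sat (Var p) w <-> val p w;
  sat_not : forall f w, sat (Not f) w <-> ~ sat f w;
  sat_box : forall A f w, sat (Box A f) w <-> (forall w', rel A w w' -> sat f w');
  rel_test : forall f w w', rel (Test f) w w' <-> (w = w' /\ sat f w);
  rel_seq : forall A B w w', rel (Seq A B) w w' <-> exists v, rel A w v /\ rel B v w';
  rel_cho : forall A B w w', rel (Cho A B) w w' <-> (rel A w w' \/ rel B w w');
  rel_star : forall A w w', rel (Star A) w w' <-> exists n, relpow (rel A) n w w';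
  rel_imp : forall f g w w', rel (Imp f g) w w' <->
      exists C, sigmaP C /\
        (forall u u', sat f u -> rel C u u' -> sat g u') /\ rel C w w'
}.

Definition tautology (f : form) : Prop := forall (M : model) (w : W M), sat M f w.

Inductive letter : Type :=
  | LAt : AtP -> letter
  | LOm : letter
  | LForm : form -> letter.

Definition word := list letter.

Inductive kstar (L : word -> Prop) : word -> Prop :=
  | kstar_nil : kstar L []
  | kstar_app u v : L u -> kstar L v -> kstar L (u ++ v).

(* Language of a program; tt is the tautology used in Omega := tt => tt *)
Fixpoint lang (tt : form) (A : prog) : word -> Prop :=
  match A with
  | Atom a => fun u => u = [LAt a]
  | Test f => fun u => u = [LForm f]
  | Imp f g => fun u =>
      (f = tt /\ g = tt /\ u = [LOm]) \/
      (~ (f = tt /\ g = tt) /\ (u = [LForm (Not f); LOm] \/ u = [LOm; LForm g]))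
  | Seq A B => fun u => exists u1 u2, u = u1 ++ u2 /\ lang tt A u1 /\ lang tt B u2
  | Cho A B => fun u => lang tt A u \/ lang tt B u
  | Star A => kstar (lang tt A)
  end.

Definition lrel (tt : form) (M : model) (l : letter) : W M -> W M -> Prop :=
  match l with
  | LAt a => rel M (Atom a)
  | LOm => rel M (Imp tt tt)
  | LForm f => rel M (Test f)
  end.

Fixpoint wrel (tt : form) (M : model) (u : word) : W M -> W M -> Prop :=
  match u with
  | [] => fun w w' => w = w'
  | l :: u' => fun w w' => exists v, lrel tt M l w v /\ wrel tt M u' v w'
  end.

Inductive block : Type :=
  | BAt : AtP -> block
  | BOm : block
  | BForms : list form -> block.

Fixpoint blocks (u : word) : list block :=
  match u with
  | [] => []
  | LAt a :: u' => BAt a :: blocks u'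
  | LOm :: u' => BOm :: blocks u'
  | LForm f :: u' =>
      match blocks u' with
      | BForms fs :: bs => BForms (f :: fs) :: bs
      | bs => BForms [f] :: bs
      end
  end.

Definition conj_equiv (fs gs : list form) : Prop :=
  forall (M : model) (w : W M),
    (forall f, In f fs -> sat M f w) <-> (forall g, In g gs -> sat M g w).

Definition block_match (b c : block) : Prop :=
  match b, c with
  | BAt a, BAt a' => a = a'
  | BOm, BOm => True
  | BForms fs, BForms gs => conj_equiv fs gs
  | _, _ => False
  end.

Definition interchangeable (u v : word) : Prop :=
  u = v \/ (u <> [] /\ v <> [] /\ Forall2 block_match (blocks u) (blocks v)).

End TauPDL.

(* The only non-structural
   case is [phi => psi]: using that [tt] is a tautology, every Sigma^+
   relation is contained in Omega = tt => tt, which yields the semantic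
   characterisation "w ->Omega w' and (w |/= phi or w' |= psi)"
   ([rel_imp_char]), matching the words (not phi) Omega and Omega psi.
   Part (2) reads a word block by block: its relation only depends on the
   atomic letters and on the conjunction of each maximal run of formulas
   ([wrel_blocks]), so blockwise-matching words denote the same relation. *)
From Stdlib Require Import List Classical.
Import ListNotations.

Section WordSemantics.
Variables (PV Idx AtP : Type) (tt : form PV Idx AtP) (M : model PV Idx AtP).

Notation word := (word PV Idx AtP).
Notation wrel := (wrel tt M).
Notation Omega := (Imp tt tt).

Lemma wrel_app (u1 u2 : word) (w w' : W M) :
  wrel (u1 ++ u2) w w' <-> exists v, wrel u1 w v /\ wrel u2 v w'.
Proof.
  revert w; induction u1 as [|l u1 IH]; intro w; simpl.
  - split; [intro H; exists w; auto | intros [v [-> H]]; exact H].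
  - split.
    + intros [v [Hl Hu]]. apply IH in Hu. destruct Hu as [v' [Hu1 Hu2]].
      exists v'; split; [exists v; auto | exact Hu2].
    + intros [v' [[v [Hl Hu1]] Hu2]]. exists v; split; [exact Hl|].
      apply IH; eauto.
Qed.

Lemma wrel_letter (l : letter PV Idx AtP) (w w' : W M) :
  wrel [l] w w' <-> lrel tt M l w w'.
Proof.
  simpl; split; [intros [v [H ->]]; exact H | intro H; exists w'; auto].
Qed.

Lemma lrel_singleton_lang (l : letter PV Idx AtP) (w w' : W M) :
  lrel tt M l w w' <-> exists u, u = [l] /\ wrel u w w'.
Proof.
  rewrite <- wrel_letter. split; [intro H; exists [l]; auto | intros [u [-> H]]; exact H].
Qed.

Lemma relpow_kstar (R : W M -> W M -> Prop) (L : word -> Prop) :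
  (forall w w', R w w' <-> exists u, L u /\ wrel u w w') ->
  forall w w', (exists n, relpow R n w w') <-> exists u, kstar L u /\ wrel u w w'.
Proof.
  intros HR w w'; split.
  - intros [n Hn]. revert w Hn. induction n as [|n IHn]; intros w Hn; simpl in Hn.
    + subst. exists []. split; [constructor | reflexivity].
    + destruct Hn as [v [Hstep Hrest]].
      destruct (IHn v Hrest) as [u [Hk Hu]].
      destruct (proj1 (HR w v) Hstep) as [u1 [L1 Hu1]].
      exists (u1 ++ u). split; [constructor; assumption|].
      apply wrel_app; eauto.
  - intros [u [Hk Hu]]. revert w Hu.
    induction Hk as [|u1 u2 L1 Hk IHk]; intros w Hu.
    + exists 0. exact Hu.
    + apply wrel_app in Hu. destruct Hu as [v [Hu1 Hu2]].
      destruct (IHk v Hu2) as [n Hn]. exists (S n). simpl. exists v.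
      split; [apply HR; eauto | exact Hn].
Qed.

Section Tautology.
Hypothesis Htt : tautology tt.

Lemma sigmaP_in_omega (C : prog PV Idx AtP) (w w' : W M) :
  sigmaP C -> rel M C w w' -> rel M Omega w w'.
Proof.
  intros HC Hr. apply rel_imp. exists C.
  split; [exact HC | split; [intros; apply Htt | exact Hr]].
Qed.

(* Semantics of phi => psi: an Omega step leaving phi or reaching psi.
   Backwards, guard an Omega witness C by the test (not phi) or psi. *)
Lemma rel_imp_char (f g : form PV Idx AtP) (w w' : W M) :
  rel M (Imp f g) w w' <-> rel M Omega w w' /\ (~ sat M f w \/ sat M g w').
Proof.
  split.
  - intro H. apply rel_imp in H. destruct H as [C [HC [Hvalid Hr]]].
    split; [exact (sigmaP_in_omega C w w' HC Hr)|].
    destruct (classic (sat M f w)) as [Hf|Hf]; [right; eauto | left; exact Hf].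
  - intros [Hom Hfg]. apply rel_imp in Hom. destruct Hom as [C [HC [_ Hr]]].
    apply rel_imp. destruct Hfg as [Hnf|Hg].
    + exists (Seq (Test (Not f)) C).
      split; [repeat constructor; exact HC|]. split.
      * intros u u' Hu Hseq. apply rel_seq in Hseq. destruct Hseq as [z [Hz _]].
        apply rel_test in Hz. destruct Hz as [_ Hz].
        apply sat_not in Hz. contradiction.
      * apply rel_seq. exists w.
        split; [apply rel_test; split; [reflexivity | apply sat_not, Hnf] | exact Hr].
    + exists (Seq C (Test g)).
      split; [repeat constructor; exact HC|]. split.
      * intros u u' _ Hseq. apply rel_seq in Hseq. destruct Hseq as [z [_ Hz]].
        apply rel_test in Hz. destruct Hz as [-> Hz]. exact Hz.
      * apply rel_seq. exists w'. split; [|apply rel_test]; auto.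
Qed.

Lemma rel_imp_lang (f g : form PV Idx AtP) (w w' : W M) :
  rel M (Imp f g) w w' <-> exists u, lang tt (Imp f g) u /\ wrel u w w'.
Proof.
  simpl. destruct (classic (f = tt /\ g = tt)) as [[-> ->]|Hn].
  - split.
    + intro H. exists [LOm _ _ _]. split; [left; auto | apply wrel_letter; exact H].
    + intros [u [[[_ [_ ->]]|[Hnot _]] Hu]]; [exact (proj1 (wrel_letter _ w w') Hu) | tauto].
  - rewrite rel_imp_char. split.
    + intros [Hom [Hnf|Hg]].
      * exists [LForm (Not f); LOm _ _ _]. split; [right; auto|].
        exists w; split; [apply rel_test; split; [reflexivity | apply sat_not, Hnf]|].
        exists w'; split; [exact Hom | reflexivity].
      * exists [LOm _ _ _; LForm g]. split; [right; auto|].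
        exists w'; split; [exact Hom|]. exists w'.
        split; [apply rel_test; split; [reflexivity | exact Hg] | reflexivity].
    + intros [u [[[? [? _]]|[_ [->| ->]]] Hu]]; [tauto| |];
        simpl in Hu; destruct Hu as [v [H1 [v' [H2 ->]]]].
      * apply rel_test in H1. destruct H1 as [<- Hnf].
        split; [exact H2 | left; apply sat_not; exact Hnf].
      * apply rel_test in H2. destruct H2 as [<- Hg]. auto.
Qed.

Theorem rel_lang (A : prog PV Idx AtP) (w w' : W M) :
  rel M A w w' <-> exists u, lang tt A u /\ wrel u w w'.
Proof.
  revert w w'.
  induction A as [a|f|f g|A IHA B IHB|A IHA B IHB|A IHA]; intros w w'.
  - exact (lrel_singleton_lang (LAt _ _ a) w w').
  - exact (lrel_singleton_lang (LForm f) w w').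
  - apply rel_imp_lang.
  - rewrite rel_seq. split.
    + intros [v [HA HB]]. apply IHA in HA. apply IHB in HB.
      destruct HA as [u1 [L1 H1]], HB as [u2 [L2 H2]].
      exists (u1 ++ u2). split; [exists u1, u2; auto | apply wrel_app; eauto].
    + intros [u [[u1 [u2 [-> [L1 L2]]]] Hu]]. apply wrel_app in Hu.
      destruct Hu as [v [H1 H2]]. exists v. split; [apply IHA | apply IHB]; eauto.
  - rewrite rel_cho, IHA, IHB. simpl. split.
    + intros [[u [L Hu]]|[u [L Hu]]]; exists u; auto.
    + intros [u [[L|L] Hu]]; [left|right]; exists u; auto.
  - rewrite rel_star. exact (relpow_kstar _ _ IHA w w').
Qed.

End Tautology.

Notation block := (block PV Idx AtP).

Definition brel (b : block) : W M -> W M -> Prop :=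
  match b with
  | @BAt _ _ _ a => rel M (Atom _ _ a)
  | @BOm _ _ _ => rel M Omega
  | @BForms _ _ _ fs => fun w v => w = v /\ forall f, In f fs -> sat M f w
  end.

Fixpoint bsrel (bs : list block) : W M -> W M -> Prop :=
  match bs with
  | [] => fun w w' => w = w'
  | b :: bs' => fun w w' => exists v, brel b w v /\ bsrel bs' v w'
  end.

Lemma bsrel_blocks_form (f : form PV Idx AtP) (u : word) (w w' : W M) :
  bsrel (blocks (LForm f :: u)) w w' <-> sat M f w /\ bsrel (blocks u) w w'.
Proof.
  assert (Hsingle : forall bs, bsrel (BForms [f] :: bs) w w' <->
                               sat M f w /\ bsrel bs w w').
  { intro bs; simpl. split.
    - intros [v [[<- Hf] Hbs]]. split; [apply Hf; left|]; auto.
    - intros [Hf Hbs]. exists w. split; [split; [reflexivity|]|exact Hbs].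
      intros g [<-|[]]; exact Hf. }
  simpl. destruct (blocks u) as [|[a| |fs] bs]; try apply Hsingle.
  simpl. split.
  - intros [v [[<- Hfs] Hbs]]. split; [apply Hfs; left; reflexivity|].
    exists w. split; [split; [reflexivity | intros g Hg; apply Hfs; right; exact Hg]
                     | exact Hbs].
  - intros [Hf [v [[<- Hfs] Hbs]]]. exists w. split; [split; [reflexivity|]|exact Hbs].
    intros g [<-|Hg]; auto.
Qed.

Lemma wrel_blocks (u : word) (w w' : W M) :
  wrel u w w' <-> bsrel (blocks u) w w'.
Proof.
  revert w; induction u as [|[a| |f] u IH]; intro w; [simpl; tauto | | |].
  - simpl. split; intros [v [H1 H2]]; exists v; split; auto; apply IH; auto.
  - simpl. split; intros [v [H1 H2]]; exists v; split; auto; apply IH; auto.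
  - rewrite bsrel_blocks_form, <- IH. simpl. split.
    + intros [v [Hf Hu]]. apply rel_test in Hf. destruct Hf as [<- Hf]. auto.
    + intros [Hf Hu]. exists w. split; [apply rel_test|]; auto.
Qed.

Lemma bsrel_match (bs cs : list block) :
  Forall2 (@block_match PV Idx AtP) bs cs ->
  forall w w', bsrel bs w w' <-> bsrel cs w w'.
Proof.
  induction 1 as [|b c bs cs Hbc _ IH]; intros w w'; simpl; [tauto|].
  assert (Hb : forall v, brel b w v <-> brel c w v).
  { intro v. destruct b, c; simpl in Hbc |- *; try contradiction; subst; try tauto.
    rewrite (Hbc M w). tauto. }
  split; intros [v [H1 H2]]; exists v; split; try apply Hb; try apply IH; auto.
Qed.

Theorem interchangeable_wrel (u v : word) :
  interchangeable u v -> forall w w', wrel u w w' <-> wrel v w w'.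
Proof.
  intros [->|[_ [_ Hmatch]]] w w'; [tauto|].
  rewrite !wrel_blocks. apply bsrel_match; exact Hmatch.
Qed.

End WordSemantics.

Theorem mainTheorem9 (PV Idx AtP : Type) (tt : form PV Idx AtP)
  (Htt : tautology tt) (M : model PV Idx AtP) :
  (forall (A : prog PV Idx AtP) (w w' : W M),
      rel M A w w' <-> exists B, lang tt A B /\ wrel tt M B w w') /\
  (forall (u v : word PV Idx AtP), interchangeable u v ->
      forall (w w' : W M), wrel tt M u w w' <-> wrel tt M v w w').
Proof.
  split.
  - exact (@rel_lang PV Idx AtP tt M Htt).
  - exact (@interchangeable_wrel PV Idx AtP tt M).
Qed.
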